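(* Let $\vartheta$ be a primitive semi-compatible random substitution with PF eigenvalue $\lambda$ and normalised right PF eigenvector $\bm R$, let $K=\max_i\ell_{1,i}$, $I_N=\vartheta(\mathcal L)\cap\mathcal L_N$, and for $\varepsilon>0$ put $\lambda^\pm_\varepsilon=\lambda\pm\varepsilon nK$. For every $\varepsilon>0$ with $\lambda>\varepsilon nK$ there is $N_0$ such that for all $N\geqslant N_0$, \[ \#I_N\;\leqslant\;N\Bigl(\frac{1}{\lambda^-_\varepsilon}-\frac{1}{\lambda^+_\varepsilon}\Bigr)\bigl(\#\mathcal L_{\lfloor N/\lambda^-_\varepsilon\rfloor}\bigr)\prod_{i=1}^n(\#\vartheta(a_i))^{(R_i+\varepsilon)N/\lambda^-_\varepsilon}. \]
   Context: Let $\mathcal A=\{a_1,\dots,a_n\}$ be a finite alphabet ($n=\#\mathcal A$), $\mathcal A^+$ the finite non-empty words over $\mathcal A$. A random substitution is a map $\vartheta$ from $\mathcal A$ to finite non-empty subsets of $\mathcal A^+$, extended to words by $\vartheta(u_1\cdots u_m)=\{w_1\cdots w_m: w_k\in\vartheta(u_k)\}$ and to sets of words by unions. $|u|$ is the length and $|u|_a$ the number of occurrences of letter $a$ in $u$; $\Phi(u)=(|u|_{a_1},\dots,|u|_{a_n})^\intercal$. $\vartheta$ is semi-compatible if for each $a$ all words in $\vartheta(a)$ have the same $\Phi$; then all words in $\vartheta(a_i)$ have common length $\ell_{1,i}$. Substitution matrix: $M_{ij}=|u|_{a_i}$, $u\in\vartheta(a_j)$; primitive means $M$ primitive, with Perron–Frobenius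 eigenvalue $\lambda$ and right PF eigenvector $\bm R=(R_1,\dots,R_n)^\intercal$, $\|\bm R\|_1=1$. The language $\mathcal L$ is the set of all subwords of words in $\vartheta^m(a)$, $a\in\mathcal A$, $m\in\mathbb N$, and $\mathcal L_\ell=\{v\in\mathcal L:|v|=\ell\}$. *)

From mathcomp Require Import all_boot.
From Stdlib Require Import Reals ClassicalEpsilon.
Set Implicit Arguments. Unset Strict Implicit. Unset Printing Implicit Defensive.

Definition pbool (P : Prop) : bool :=
  if excluded_middle_informative P then true else false.

Section RandSubst.
Variable A : finType.
(* A random substitution: each letter is sent to a finite non-empty set of
   non-empty words, represented by a list (the set is its set of members). *)
Variable theta : A -> seq (seq A).

Definition is_rand_subst : Prop :=
  forall a, theta a <> [::] /\ forall w, w \in theta a -> w <> [::].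

Definition card_img (a : A) : nat := size (undup (theta a)).

Fixpoint theta_word (u : seq A) : seq (seq A) :=
  match u with
  | [::] => [:: [::]]
  | a :: u' => [seq x ++ y | x <- theta a, y <- theta_word u']
  end.

Definition theta_set (S : seq (seq A)) : seq (seq A) :=
  flatten [seq theta_word w | w <- S].

Definition theta_pow (m : nat) (a : A) : seq (seq A) := iter m theta_set [:: [:: a]].

Definition semi_compatible : Prop :=
  forall a u v, u \in theta a -> v \in theta a -> forall b, count_mem b u = count_mem b v.

(* ell_{1,a}: the common length of the words in theta(a) *)
Definition ell1 (a : A) : nat := size (head [::] (theta a)).
Definition Kmax : nat := \max_(a : A) ell1 a.

Definition subst_mx (b a : A) : nat := count_mem b (head [::] (theta a)).

Fixpoint mx_pow (k : nat) : A -> A -> nat :=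
  match k with
  | 0 => fun b a => nat_of_bool (b == a)
  | k'.+1 => fun b a => \sum_(c : A) subst_mx b c * mx_pow k' c a
  end.

Definition primitive_subst : Prop :=
  exists k, 0 < k /\ forall b a, 0 < mx_pow k b a.

(* lam is the Perron-Frobenius eigenvalue of M and Rv its right PF eigenvector
   normalised in l^1: a strictly positive right eigenvector with sum 1. *)
Definition PF_data (lam : R) (Rv : A -> R) : Prop :=
  (0 < lam)%R /\ (forall a, 0 < Rv a)%R /\
  foldr Rplus 0%R (map Rv (enum A)) = 1%R /\
  forall b, foldr Rplus 0%R
              (map (fun c => INR (subst_mx b c) * Rv c)%R (enum A)) = (lam * Rv b)%R.

Definition inL (v : seq A) : Prop :=
  exists a m w, w \in theta_pow m a /\ infix v w.

Definition Lcard (l : nat) : nat := #|[set t : l.-tuple A | pbool (inL t)]|.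

Definition Icard (N : nat) : nat :=
  #|[set t : N.-tuple A |
      pbool (inL t /\ exists v, inL v /\ (t : seq A) \in theta_word v)]|.

End RandSubst.

Definition floorR (x : R) : nat := Z.to_nat (Int_part x).

Definition prodA (A : finType) (f : A -> R) : R := foldr Rmult 1%R (map f (enum A)).

(* Every t in I_N is a word of theta(u) for some legal word u.  Since
   |t| = sum_c |u|_c ell_c and, by Perron-Frobenius theory, long legal words have
   letter frequencies close to the eigenvector R (with lam = sum_c R_c ell_c),
   the length of u lies in a window [N/(lam + delta nK), N/(lam - delta nK)] with
   delta = eps/2; for N large this window contains at most N(1/lam^- - 1/lam^+)
   integers.  For each admissible length m, #L_m <= #L_(floor(N/lam^-)) because
   the language grows, and every u has at most prod_a #theta(a)^(|u|_a)
   <= prod_a #theta(a)^((R_a + eps) N/lam^-) images. *)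

From mathcomp Require Import all_boot.
From Stdlib Require Import Reals.
From HB Require Import structures.
From Stdlib Require Import Lra Classical ClassicalEpsilon.
From Stdlib Require Znat.
Set Implicit Arguments. Unset Strict Implicit. Unset Printing Implicit Defensive.

Section Derivation.
Variables (A : finType) (theta : A -> seq (seq A)).

Definition derives (k : nat) (u w : seq A) : bool :=
  w \in iter k (theta_set theta) [:: u].

Lemma theta_word_catP x y w : w \in theta_word theta (x ++ y) <->
  exists w1 w2, [/\ w = w1 ++ w2, w1 \in theta_word theta x & w2 \in theta_word theta y].
Proof.
elim: x w => [|a x IH] w /=.
  split; first by move=> Hw; exists [::], w; rewrite inE.
  by case=> w1 [w2 [-> ]]; rewrite inE => /eqP ->.
split.
  case/allpairsP=> [[p q] [/= Hp Hq ->]].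
  case/IH: Hq => w1 [w2 [-> H1 H2]].
  exists (p ++ w1), w2; split => //; first by rewrite catA.
  by apply/allpairsP; exists (p, w1).
case=> w1 [w2 [-> /allpairsP [[p q] [/= Hp Hq ->]] H2]].
apply/allpairsP; exists (p, q ++ w2); split => //=; last by rewrite catA.
by apply/IH; exists q, w2.
Qed.

Lemma theta_setP S w :
  w \in theta_set theta S <-> exists2 s, s \in S & w \in theta_word theta s.
Proof. by split => [/flatten_mapP|Hw]; [|apply/flatten_mapP]. Qed.

Lemma derives0 u w : derives 0 u w <-> w = u.
Proof. by rewrite /derives /= inE; split => [/eqP|->]. Qed.

Lemma derivesS k u w :
  derives k.+1 u w <-> exists s, derives k u s /\ w \in theta_word theta s.
Proof.
rewrite /derives /= theta_setP; split; first by case=> s Hs Hw; exists s.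
by case=> s [Hs Hw]; exists s.
Qed.

Lemma derives_add i j u w :
  derives (j + i) u w <-> exists s, derives i u s /\ derives j s w.
Proof.
elim: j w => [|j IH] w.
  split; first by move=> Hw; exists w; split => //; apply/derives0.
  by case=> s [Hs /derives0 ->].
rewrite addSn derivesS; split.
  by case=> s [/IH [r [Hr Hs]] Hw]; exists r; split => //; apply/derivesS; exists s.
by case=> r [Hr /derivesS [s [Hs Hw]]]; exists s; split => //; apply/IH; exists r.
Qed.

Lemma derives_cat k x y x' y' :
  derives k x x' -> derives k y y' -> derives k (x ++ y) (x' ++ y').
Proof.
elim: k x' y' => [|k IH] x' y'; first by move=> /derives0 -> /derives0 ->; apply/derives0.
move=> /derivesS [s1 [H1 H1']] /derivesS [s2 [H2 H2']].
apply/derivesS; exists (s1 ++ s2); split; first exact: IH.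
by apply/theta_word_catP; exists x', y'.
Qed.

Lemma derives_split k x y w : derives k (x ++ y) w ->
  exists w1 w2, [/\ w = w1 ++ w2, derives k x w1 & derives k y w2].
Proof.
elim: k w => [|k IH] w.
  by move/derives0 ->; exists x, y; split => //; apply/derives0.
case/derivesS => s [/IH [s1 [s2 [-> H1 H2]]] /theta_word_catP [w1 [w2 [-> Hw1 Hw2]]]].
by exists w1, w2; split => //; apply/derivesS; [exists s1 | exists s2].
Qed.

Lemma derives_nil k w : derives k [::] w -> w = [::].
Proof.
elim: k w => [|k IH] w; first by move/derives0.
by case/derivesS => s [/IH -> ]; rewrite /= inE => /eqP.
Qed.

End Derivation.

Section Abelianisation.
Variables (A : finType) (theta : A -> seq (seq A)).
Hypothesis Hrs : is_rand_subst theta.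
Hypothesis Hsc : semi_compatible theta.

Lemma sum_seq_count (s : seq A) (f : A -> nat) :
  \sum_(c <- s) f c = \sum_(c : A) count_mem c s * f c.
Proof.
elim: s => [|x s IH]; first by rewrite big_nil big1 // => c _; rewrite mul0n.
rewrite big_cons IH /=.
have -> : \sum_(c : A) ((x == c) + count_mem c s) * f c =
   \sum_(c : A) ((x == c) * f c) + \sum_(c : A) count_mem c s * f c.
  by rewrite -big_split /=; apply: eq_bigr => c _; rewrite mulnDl.
congr (_ + _); rewrite (bigD1 x) //= eqxx mul1n big1 ?addn0 // => c /negbTE.
by rewrite eq_sym => ->.
Qed.

Lemma size_count (s : seq A) : size s = \sum_(c : A) count_mem c s.
Proof.
have := sum_seq_count s (fun _ => 1); rewrite big_const_seq count_predT iter_addn_0 mul1n.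
by move=> ->; apply: eq_bigr => c _; rewrite muln1.
Qed.

Lemma head_theta a : head [::] (theta a) \in theta a.
Proof. by case: (Hrs a) => + _; case: (theta a) => //= x s _; rewrite inE eqxx. Qed.

Lemma count_theta a x b : x \in theta a -> count_mem b x = subst_mx theta b a.
Proof. by move=> Hx; apply: (Hsc Hx (head_theta a)). Qed.

Lemma count_theta_word u w b : w \in theta_word theta u ->
  count_mem b w = \sum_(c <- u) subst_mx theta b c.
Proof.
elim: u w => [|a u IH] w /=; first by rewrite inE => /eqP ->; rewrite big_nil.
case/allpairsP => [[p q] [/= Hp Hq ->]].
by rewrite count_cat big_cons (count_theta b Hp) (IH _ Hq).
Qed.

Lemma count_derives_letter k a w b :
  derives theta k [:: a] w -> count_mem b w = mx_pow theta k b a.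
Proof.
elim: k w b => [|k IH] w b; first by move/derives0 => ->; rewrite /= addn0 eq_sym.
case/derivesS => s [Hs Hw]; rewrite (count_theta_word b Hw) sum_seq_count /=.
by apply: eq_bigr => c _; rewrite (IH _ _ Hs) mulnC.
Qed.

Lemma size_derives_letter k a w :
  derives theta k [:: a] w -> size w = \sum_(b : A) mx_pow theta k b a.
Proof.
by move=> Hw; rewrite size_count; apply: eq_bigr => b _; rewrite (count_derives_letter b Hw).
Qed.

Lemma mx_pow_add k j b a :
  mx_pow theta (k + j) b a = \sum_c mx_pow theta k b c * mx_pow theta j c a.
Proof.
elim: k b a => [|k IH] b a.
  rewrite add0n (bigD1 b) //= eqxx mul1n big1 ?addn0 // => c /negbTE.
  by rewrite eq_sym => ->.
rewrite addSn /= (eq_bigr (fun c => \sum_d subst_mx theta b c *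
   (mx_pow theta k c d * mx_pow theta j d a))); last by move=> c _; rewrite IH big_distrr.
rewrite exchange_big /=; apply: eq_bigr => d _.
by rewrite big_distrl /=; apply: eq_bigr => c _; rewrite mulnA.
Qed.

Lemma size_theta_word u t : t \in theta_word theta u ->
  size t = \sum_(c : A) count_mem c u * ell1 theta c.
Proof.
move=> Ht; rewrite size_count (eq_bigr _ (fun b _ => count_theta_word b Ht)).
rewrite (eq_bigr _ (fun b _ => sum_seq_count u (fun c => subst_mx theta b c))) exchange_big /=.
by apply: eq_bigr => c _; rewrite /ell1 size_count big_distrr.
Qed.

Lemma ell1_pos c : 0 < ell1 theta c.
Proof. by rewrite /ell1; have := head_theta c; case: (Hrs c) => _ /[apply]; case: (head _ _). Qed.

Lemma ell1_le_Kmax c : ell1 theta c <= Kmax theta.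
Proof. exact: (leq_bigmax (F := ell1 theta) c). Qed.

Lemma theta_word_exists u : exists w, w \in theta_word theta u.
Proof.
elim: u => [|a u [w Hw]]; first by exists [::]; rewrite inE.
case: (Hrs a) => Hne _; case E: (theta a) Hne => [//|x s] _.
by exists (x ++ w); apply/allpairsP; exists (x, w); rewrite E inE eqxx.
Qed.

Lemma derives_exists k u : exists w, derives theta k u w.
Proof.
elim: k => [|k [s Hs]]; first by exists u; apply/derives0.
by have [w Hw] := theta_word_exists s; exists w; apply/derivesS; exists s.
Qed.

Lemma size_theta_word_ge u w : w \in theta_word theta u -> size u <= size w.
Proof.
elim: u w => [|a u IH] w //= /allpairsP [[x y] [/= Hx Hy ->]].
rewrite size_cat -addn1 addnC leq_add ?IH //.
by case: (Hrs a) => _ /(_ x Hx); case: x {Hx}.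
Qed.

Lemma size_derives_ge k u w : derives theta k u w -> size u <= size w.
Proof.
elim: k w => [|k IH] w; first by move/derives0 ->.
by case/derivesS => s [/IH H1 /size_theta_word_ge H2]; apply: leq_trans H2.
Qed.

Lemma number_of_images u :
  (size (undup (theta_word theta u))
     <= \prod_(b : A) expn (card_img theta b) (count_mem b u))%nat.
Proof.
elim: u => [|a u IH]; first by rewrite big1 //= => b _; rewrite expn0.
apply: (@leq_trans (size [seq x ++ y | x <- undup (theta a), y <- undup (theta_word theta u)])).
  apply: uniq_leq_size; first exact: undup_uniq.
  move=> z; rewrite mem_undup => /allpairsP [[x y] [/= Hx Hy ->]].
  by apply/allpairsP; exists (x, y); rewrite !mem_undup.
rewrite size_allpairs (eq_bigr (fun b => expn (card_img theta b) (a == b) *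
  expn (card_img theta b) (count_mem b u))); last by move=> b _; rewrite -expnD.
rewrite big_split /= (bigD1 a) //= eqxx expn1 big1 ?muln1; last first.
  by move=> b /negbTE; rewrite eq_sym => ->; rewrite expn0.
by rewrite leq_mul2l IH orbT.
Qed.

Lemma card_img_pos b : (0 < card_img theta b)%nat.
Proof.
rewrite /card_img; have := head_theta b; move: (head _ _) => x.
by rewrite -mem_undup; case: (undup _).
Qed.

End Abelianisation.

Lemma Rplus_assoc_law : associative Rplus.
Proof. by move=> x y z; rewrite Rplus_assoc. Qed.
HB.instance Definition _ :=
  Monoid.isComLaw.Build R 0%R Rplus Rplus_assoc_law Rplus_comm Rplus_0_l.

Section RealSums.
Variable A : finType.
Local Open Scope R_scope.

Definition rsum (f : A -> R) : R := \big[Rplus/0]_(c : A) f c.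

Lemma foldr_rsum f : foldr Rplus 0 (map f (enum A)) = rsum f.
Proof.
rewrite /rsum -big_enum /=; elim: (enum A) => [|x s IH]; first by rewrite big_nil.
by rewrite big_cons /= IH.
Qed.

Lemma rsum_ext f g : (forall c, f c = g c) -> rsum f = rsum g.
Proof. by move=> H; apply: eq_bigr => c _. Qed.

Lemma rsum_add f g : rsum (fun c => f c + g c) = rsum f + rsum g.
Proof. by rewrite /rsum big_split. Qed.

Lemma rsum_scal k f : rsum (fun c => k * f c) = k * rsum f.
Proof.
rewrite /rsum; apply: (big_rec2 (fun x y => x = k * y)); first by ring.
by move=> i x y _ ->; ring.
Qed.

Lemma rsum_sub f g : rsum (fun c => f c - g c) = rsum f - rsum g.
Proof.
have Hopp : rsum (fun c => - g c) = - rsum g.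
  by rewrite -(Rmult_1_l (rsum g)) Ropp_mult_distr_l -rsum_scal; apply: rsum_ext => c; ring.
by rewrite /Rminus -Hopp -rsum_add.
Qed.

Lemma rsum_le f g : (forall c, f c <= g c) -> rsum f <= rsum g.
Proof.
move=> H; rewrite /rsum; apply: (big_rec2 (fun x y => x <= y)); first lra.
by move=> i x y _ Hxy; have := H i; lra.
Qed.

Lemma rsum_ge0 f : (forall c, 0 <= f c) -> 0 <= rsum f.
Proof.
move=> H; rewrite /rsum; apply: (big_ind (fun x => 0 <= x)) => //; first lra.
by move=> x y; lra.
Qed.

Lemma rsum_term f a : (forall c, 0 <= f c) -> f a <= rsum f.
Proof.
move=> H; rewrite /rsum (bigD1 a) //=.
have : 0 <= \big[Rplus/0]_(c | c != a) f c.
  by apply: (big_ind (fun x => 0 <= x)) => //; [lra | move=> x y; lra].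
lra.
Qed.

Lemma rsum_abs f : Rabs (rsum f) <= rsum (fun c => Rabs (f c)).
Proof.
rewrite /rsum; apply: (big_rec2 (fun x y => Rabs x <= y)); first by rewrite Rabs_R0; lra.
by move=> i x y _ H; apply: Rle_trans (Rabs_triang _ _) _; lra.
Qed.

Lemma rsum_const k : rsum (fun _ => k) = INR #|A| * k.
Proof.
rewrite /rsum big_const; elim: #|A| => [|n IH]; first by rewrite /=; ring.
by rewrite iterS IH S_INR; ring.
Qed.

Lemma rsum_swap (f : A -> A -> R) :
  rsum (fun c => rsum (f c)) = rsum (fun d => rsum (fun c => f c d)).
Proof. by rewrite /rsum exchange_big. Qed.

Lemma INR_sum (n : A -> nat) : INR (\sum_c n c) = rsum (fun c => INR (n c)).
Proof.
rewrite /rsum; apply: (big_rec2 (fun x y => INR x = y)) => //.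
by move=> i x y _ <-; rewrite plus_INR.
Qed.

End RealSums.

Lemma Rdiv_le_0_compat (a b : R) : (0 <= a)%R -> (0 < b)%R -> (0 <= a / b)%R.
Proof. by move=> Ha Hb; apply: Rmult_le_pos => //; left; apply: Rinv_0_lt_compat. Qed.

Lemma Rdiv_le_l (x y z : R) : (0 < y)%R -> (x <= z * y)%R -> (x / y <= z)%R.
Proof.
move=> Hy H; have Hi : (0 <= / y)%R by left; apply: Rinv_0_lt_compat.
have := Rmult_le_compat_r _ _ _ Hi H.
by have -> : (z * y * / y = z)%R by field; lra.
Qed.

Lemma Rdiv_ge_r (x y z : R) : (0 < y)%R -> (z * y <= x)%R -> (z <= x / y)%R.
Proof.
move=> Hy H; have Hi : (0 <= / y)%R by left; apply: Rinv_0_lt_compat.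
have := Rmult_le_compat_r _ _ _ Hi H.
by have -> : (z * y * / y = z)%R by field; lra.
Qed.

Lemma Rabs_le_bounds (x d : R) : (Rabs x <= d)%R -> (- d <= x <= d)%R.
Proof. by move=> H; have := Rle_abs x; have := Rle_abs (- x); rewrite Rabs_Ropp; lra. Qed.

Lemma INR_ge1 n : (0 < n)%N -> (1 <= INR n)%R.
Proof. by case: n => // n _; rewrite S_INR; have := pos_INR n; lra. Qed.

(* If 0 < g <= 1 <= L then (L - g)^T B <= eta L^T for some T: the ratio
   (L - g)/L lies in [0, 1). *)
Lemma geometric_decay (L g B eta : R) : (1 <= L)%R -> (0 < g)%R -> (g <= 1)%R ->
  (0 <= B)%R -> (0 < eta)%R -> exists T : nat, ((L - g) ^ T * B <= eta * L ^ T)%R.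
Proof.
move=> L1 g0 g1 B0 He.
set rho := ((L - g) / L)%R.
have rho0 : (0 <= rho)%R by apply: Rdiv_le_0_compat; lra.
have rho1 : (Rabs rho < 1)%R.
  rewrite Rabs_right; last by apply: Rle_ge.
  have -> : rho = (1 - g * / L)%R by rewrite /rho; field; lra.
  have : (0 < g * / L)%R by apply: Rmult_lt_0_compat => //; apply: Rinv_0_lt_compat; lra.
  lra.
have [T HT] : exists T, forall n, (n >= T)%coq_nat -> (Rabs (rho ^ n) < eta / (B + 1))%R.
  by apply: pow_lt_1_zero => //; apply: Rdiv_lt_0_compat; lra.
exists T; have {}HT := HT T (le_n T).
rewrite Rabs_right in HT; last by apply: Rle_ge; apply: pow_le.
have LT : (0 < L ^ T)%R by apply: pow_lt; lra.
have -> : ((L - g) ^ T = rho ^ T * L ^ T)%R.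
  by rewrite -Rpow_mult_distr (_ : rho * L = L - g)%R // /rho; field; lra.
have small : (rho ^ T * B <= eta)%R.
  apply: Rle_trans (_ : eta / (B + 1) * B <= eta)%R.
    by apply: Rmult_le_compat_r; lra.
  have -> : (eta / (B + 1) * B = eta - eta / (B + 1))%R by field; lra.
  have : (0 < eta / (B + 1))%R by apply: Rdiv_lt_0_compat; lra.
  lra.
have := Rmult_le_compat_r _ _ _ (Rlt_le _ _ LT) small.
by rewrite Rmult_assoc (Rmult_comm B) -Rmult_assoc.
Qed.

Section PerronFrobenius.
Variables (A : finType) (theta : A -> seq (seq A)) (lam : R) (Rv : A -> R).
Hypothesis HPF : PF_data theta lam Rv.
Local Open Scope R_scope.

Lemma lam_pos : 0 < lam. Proof. by case: HPF. Qed.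
Lemma Rv_pos b : 0 < Rv b. Proof. by case: HPF => _ [H _]. Qed.
Lemma Rv_sum : rsum Rv = 1. Proof. by case: HPF => _ [_ [H _]]; rewrite -foldr_rsum. Qed.
Lemma Rv_eig b : rsum (fun c => INR (subst_mx theta b c) * Rv c) = lam * Rv b.
Proof. by case: HPF => _ [_ [_ H]]; rewrite -foldr_rsum. Qed.

Lemma Rv_le1 b : Rv b <= 1.
Proof. by rewrite -Rv_sum; apply: rsum_term => c; have := Rv_pos c; lra. Qed.

Lemma alphabet_nonempty : (0 < #|A|)%nat.
Proof.
have : 1 <= INR #|A|.
  by rewrite -Rv_sum -(Rmult_1_r (INR _)) -rsum_const; apply: rsum_le; apply: Rv_le1.
by case: #|A| => //=; lra.
Qed.

Lemma Rv_eig_pow k i : rsum (fun j => INR (mx_pow theta k i j) * Rv j) = lam ^ k * Rv i.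
Proof.
elim: k i => [|k IH] i.
  rewrite /rsum (bigD1 i) //= eqxx big1 /=; first by ring.
  by move=> j /negbTE; rewrite eq_sym => ->; rewrite /=; ring.
rewrite (rsum_ext (g := fun j => rsum (fun c =>
   INR (subst_mx theta i c) * INR (mx_pow theta k c j) * Rv j))); last first.
  move=> j; rewrite /= INR_sum -(Rmult_comm (Rv j)) -rsum_scal.
  by apply: rsum_ext => c; rewrite mult_INR; ring.
rewrite -rsum_swap (rsum_ext (g := fun c => lam ^ k * (INR (subst_mx theta i c) * Rv c))).
  by rewrite rsum_scal Rv_eig /=; ring.
move=> c; rewrite -Rmult_assoc (Rmult_comm (lam ^ k)) Rmult_assoc -IH -rsum_scal.
by apply: rsum_ext => j; ring.
Qed.

(* A fixed reference letter: the contraction below compares every column with it. *)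
Variable a0 : A.

(* One contraction step: if a non-negative matrix B has eigenvector R for Lam and
   a column a0 of entries >= 1, applying B to a vector squeezed between lo*R and
   hi*R shrinks the width (hi - lo) of the squeeze by the factor (Lam - R a0)/Lam
   relative to the growth Lam. *)
Lemma contraction_step (B : A -> A -> R) (Lam lo hi : R) (x : A -> R) :
  (forall i j, 0 <= B i j) -> (forall i, 1 <= B i a0) ->
  (forall i, rsum (fun j => B i j * Rv j) = Lam * Rv i) ->
  (forall j, lo * Rv j <= x j <= hi * Rv j) ->
  exists lo', Lam * lo <= lo' /\ forall i,
    lo' * Rv i <= rsum (fun j => B i j * x j) <= (lo' + (Lam - Rv a0) * (hi - lo)) * Rv i.
Proof.
move=> HB0 HB1 HBe Hx.
exists (Lam * lo + (x a0 - lo * Rv a0)); split; first by have := Hx a0; lra.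
move=> i; have Ri := Rv_pos i; have Ri1 := Rv_le1 i.
have below : rsum (fun j => B i j * x j) - Lam * lo * Rv i =
             rsum (fun j => B i j * (x j - lo * Rv j)).
  rewrite (rsum_ext (f := fun j => B i j * (x j - lo * Rv j))
                    (g := fun j => B i j * x j - lo * (B i j * Rv j))); last by move=> j; ring.
  by rewrite rsum_sub rsum_scal HBe; ring.
have above : Lam * hi * Rv i - rsum (fun j => B i j * x j) =
             rsum (fun j => B i j * (hi * Rv j - x j)).
  rewrite (rsum_ext (f := fun j => B i j * (hi * Rv j - x j))
                    (g := fun j => hi * (B i j * Rv j) - B i j * x j)); last by move=> j; ring.
  by rewrite rsum_sub rsum_scal HBe; ring.
have below_a0 : B i a0 * (x a0 - lo * Rv a0) <= rsum (fun j => B i j * (x j - lo * Rv j)).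
  apply: (rsum_term (f := fun j => B i j * (x j - lo * Rv j))) => j.
  by apply: Rmult_le_pos; [apply: HB0 | have := Hx j; lra].
have above_a0 : B i a0 * (hi * Rv a0 - x a0) <= rsum (fun j => B i j * (hi * Rv j - x j)).
  apply: (rsum_term (f := fun j => B i j * (hi * Rv j - x j))) => j.
  by apply: Rmult_le_pos; [apply: HB0 | have := Hx j; lra].
have Ha := Hx a0; have Hb := HB1 i.
have U1 : (x a0 - lo * Rv a0) * Rv i <= B i a0 * (x a0 - lo * Rv a0) by nra.
have U2 : (hi * Rv a0 - x a0) * Rv i <= B i a0 * (hi * Rv a0 - x a0) by nra.
split; nra.
Qed.

Variable p : nat.
Hypothesis Hp : forall b a, (0 < mx_pow theta p b a)%nat.

Definition column (k : nat) (c b : A) : R := INR (mx_pow theta k b c).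

(* A bound on the ratios M^p(b, c) / R_b, giving the initial squeeze. *)
Definition ratio_bound : R := rsum (fun c => rsum (fun b => column p c b / Rv b)).

Lemma ratio_bound_ge c b : column p c b / Rv b <= ratio_bound.
Proof.
have T c' b' : 0 <= column p c' b' / Rv b'.
  by apply: Rdiv_le_0_compat; [apply: pos_INR | apply: Rv_pos].
apply: Rle_trans (rsum_term (f := fun c => rsum (fun b => column p c b / Rv b)) c _).
  exact: (rsum_term (f := fun b => column p c b / Rv b)).
by move=> c'; apply: rsum_ge0.
Qed.

Lemma ratio_bound_ge0 : 0 <= ratio_bound.
Proof.
apply: Rle_trans (ratio_bound_ge a0 a0).
by apply: Rdiv_le_0_compat; [apply: pos_INR | apply: Rv_pos].
Qed.

Lemma column_add k c i :
  column (p + k) c i = rsum (fun j => INR (mx_pow theta p i j) * column k c j).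
Proof. by rewrite /column mx_pow_add INR_sum; apply: rsum_ext => j; rewrite mult_INR. Qed.

Lemma column_squeeze t c : exists lo, (lam ^ p) ^ t <= lo /\ forall b,
  lo * Rv b <= column (p * t.+1) c b <= (lo + (lam ^ p - Rv a0) ^ t * ratio_bound) * Rv b.
Proof.
elim: t => [|t [lo [Hlo Hb]]].
  exists 1; split; first by rewrite /=; lra.
  move=> b; rewrite muln1 /=; have Rb := Rv_pos b.
  have X1 : 1 <= column p c b by apply: INR_ge1.
  have X2 := ratio_bound_ge c b.
  have X3 : column p c b = column p c b / Rv b * Rv b by field; lra.
  split; first by have := Rv_le1 b; nra.
  by rewrite X3; apply: Rmult_le_compat_r; lra.
have [lo' [H1 H2]] := contraction_step (B := fun i j => INR (mx_pow theta p i j))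
  (lo := lo) (hi := lo + (lam ^ p - Rv a0) ^ t * ratio_bound) (x := column (p * t.+1) c)
  (fun i j => pos_INR _) (fun i => INR_ge1 (Hp i a0)) (Rv_eig_pow p) Hb.
exists lo'; split.
  have : 0 <= lam ^ p by apply: pow_le; have := lam_pos; lra.
  by rewrite /=; nra.
move=> b; rewrite mulnS column_add; have := H2 b.
by rewrite /= Rplus_minus_l Rmult_assoc.
Qed.

(* lam^p >= 1, since M^p has entries >= 1 and R is positive. *)
Lemma lam_pow_ge1 : 1 <= lam ^ p.
Proof.
have T : INR (mx_pow theta p a0 a0) * Rv a0 <= rsum (fun j => INR (mx_pow theta p a0 j) * Rv j).
  apply: (rsum_term (f := fun j => INR (mx_pow theta p a0 j) * Rv j)) => j.
  by apply: Rmult_le_pos; [apply: pos_INR | have := Rv_pos j; lra].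
have := INR_ge1 (Hp a0 a0); have := Rv_pos a0; rewrite Rv_eig_pow in T; nra.
Qed.

Lemma squeeze_relative_error (x : A -> R) lo W eta :
  0 <= eta -> 0 <= lo -> 0 <= W <= eta * lo ->
  (forall b, lo * Rv b <= x b <= (lo + W) * Rv b) ->
  forall b, Rabs (x b - Rv b * rsum x) <= eta * rsum x.
Proof.
move=> He Hlo [W0 W1] Hx b.
have S_lo : lo <= rsum x.
  by rewrite -(Rmult_1_r lo) -Rv_sum -rsum_scal; apply: rsum_le => j; case: (Hx j).
have S_hi : rsum x <= lo + W.
  by rewrite -(Rmult_1_r (lo + W)) -Rv_sum -rsum_scal; apply: rsum_le => j; case: (Hx j).
have Rb := Rv_pos b; have Rb1 := Rv_le1 b; have [X1 X2] := Hx b.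
have err : W * Rv b <= eta * rsum x.
  apply: Rle_trans (_ : W <= _); first by nra.
  by apply: Rle_trans W1 _; apply: Rmult_le_compat_l.
by apply: Rabs_le; split; nra.
Qed.

Lemma column_convergence eta : 0 < eta -> exists k, forall c b,
  Rabs (column k c b - Rv b * rsum (column k c)) <= eta * rsum (column k c).
Proof.
move=> He; have L1 := lam_pow_ge1.
have [T HT] := geometric_decay L1 (Rv_pos a0) (Rv_le1 a0) ratio_bound_ge0 He.
exists (p * T.+1)%nat => c.
have [lo [Hlo Hb]] := column_squeeze T c.
apply: squeeze_relative_error Hb; first lra; first by apply: Rle_trans Hlo; apply: pow_le; lra.
have g1 := Rv_le1 a0.
split; first by apply: Rmult_le_pos; [apply: pow_le; lra | apply: ratio_bound_ge0].
by apply: Rle_trans HT _; apply: Rmult_le_compat_l; lra.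
Qed.

End PerronFrobenius.

Lemma cat_eq_cases (T : Type) (w1 w2 p q : seq T) : w1 ++ w2 = p ++ q ->
  (exists r, p = w1 ++ r /\ w2 = r ++ q) \/ (exists r, w1 = p ++ r /\ q = r ++ w2).
Proof.
elim: w1 p => [|x w1 IH] p /=; first by move=> ->; left; exists p.
case: p => [|y p] /=; first by move=> <-; right; exists (x :: w1).
case=> -> /IH [[r [-> ->]]|[r [-> ->]]]; [left|right]; by exists r.
Qed.

Lemma nat_above (x : R) : exists n : nat, (x <= INR n)%R.
Proof.
have [H1 _] := archimed x.
case: (Z.lt_ge_cases 0 (up x)) => Hz.
  exists (Z.to_nat (up x)); rewrite INR_IZR_INZ Znat.Z2Nat.id; first lra.
  exact: Z.lt_le_incl.
by exists 0%nat; have := IZR_le _ _ Hz; rewrite /=; lra.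
Qed.

Section Frequencies.
Variables (A : finType) (theta : A -> seq (seq A)) (lam : R) (Rv : A -> R).
Hypothesis Hrs : is_rand_subst theta.
Hypothesis Hsc : semi_compatible theta.
Hypothesis HPF : PF_data theta lam Rv.
Local Open Scope R_scope.

Definition discrepancy (b : A) (x : seq A) : R := INR (count_mem b x) - Rv b * INR (size x).

Lemma discrepancy_cat b x y : discrepancy b (x ++ y) = discrepancy b x + discrepancy b y.
Proof. by rewrite /discrepancy count_cat size_cat !plus_INR; ring. Qed.

Lemma discrepancy_le_size b x : Rabs (discrepancy b x) <= INR (size x).
Proof.
have H1 : INR (count_mem b x) <= INR (size x) by apply/le_INR/leP/count_size.
have H2 := pos_INR (count_mem b x).
have R1 := Rv_pos HPF b; have R2 := Rv_le1 HPF b.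
by rewrite /discrepancy; apply: Rabs_le; split; nra.
Qed.

(* Fix k such that the blocks theta^k(c) have discrepancy at most eta times their length. *)
Variables (k : nat) (eta : R).
Hypothesis Heta : 0 <= eta.
Hypothesis Hblock : forall c b,
  Rabs (column theta k c b - Rv b * rsum (column theta k c)) <= eta * rsum (column theta k c).

Definition block_max : nat := (\max_(c : A) \sum_(j : A) mx_pow theta k j c)%nat.

Lemma block_size c w : derives theta k [:: c] w -> (size w <= block_max)%nat.
Proof.
move=> Hw; rewrite (size_derives_letter Hrs Hsc Hw).
exact: (leq_bigmax (F := fun c => \sum_(j : A) mx_pow theta k j c) c).
Qed.

Lemma block_discrepancy c w b :
  derives theta k [:: c] w -> Rabs (discrepancy b w) <= eta * INR (size w).
Proof.
move=> Hw.
have Esize : INR (size w) = rsum (column theta k c).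
  by rewrite (size_derives_letter Hrs Hsc Hw) INR_sum.
by rewrite /discrepancy Esize (count_derives_letter Hrs Hsc b Hw); apply: Hblock.
Qed.

Lemma short_discrepancy b x : (size x <= block_max)%nat ->
  Rabs (discrepancy b x) <= eta * INR (size x) + INR block_max.
Proof.
move=> Hx; have := le_INR _ _ (elimT leP Hx); have := discrepancy_le_size b x.
have : 0 <= eta * INR (size x) by apply: Rmult_le_pos => //; apply: pos_INR.
lra.
Qed.

(* A prefix of a concatenation of blocks is a union of whole blocks plus one
   partial block, whence one error term block_max. *)
Lemma prefix_discrepancy u w b : derives theta k u w -> forall p q, w = p ++ q ->
  Rabs (discrepancy b p) <= eta * INR (size p) + INR block_max.
Proof.
elim: u w => [|a u IH] w.
  move/derives_nil => -> [|//] q _; rewrite /discrepancy /= Rmult_0_r Rminus_0_r Rabs_R0.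
  by have := pos_INR block_max; lra.
rewrite -cat1s => /derives_split [w1 [w2 [-> H1 H2]]] p q /cat_eq_cases [[r [-> E]]|[r [E _]]].
  have := IH _ H2 r q E; have := block_discrepancy b H1.
  rewrite discrepancy_cat size_cat plus_INR => X Y.
  by have := Rabs_triang (discrepancy b w1) (discrepancy b r); lra.
apply: short_discrepancy; apply: leq_trans (block_size H1).
by rewrite E size_cat leq_addr.
Qed.

(* A factor of a concatenation of blocks: at most two partial blocks. *)
Lemma factor_discrepancy u w b : derives theta k u w -> forall s1 v s2, w = s1 ++ v ++ s2 ->
  Rabs (discrepancy b v) <= eta * INR (size v) + 2 * INR block_max.
Proof.
have B0 := pos_INR block_max.
elim: u w => [|a u IH] w.
  move/derives_nil => -> s1 v s2; case: v => [_|x v]; last by case: s1.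
  by rewrite /discrepancy /= Rmult_0_r Rminus_0_r Rabs_R0; lra.
rewrite -cat1s => /derives_split [w1 [w2 [-> H1 H2]]] s1 v s2
  /cat_eq_cases [[r [E1 E2]]|[r [E1 E2]]].
  exact: IH H2 r v s2 E2.
have S1 := block_size H1; rewrite E1 size_cat in S1.
case/esym/cat_eq_cases: E2 => [[r' [E3 E4]]|[r' [E3 E4]]].
  have := prefix_discrepancy b H2 E4.
  have := short_discrepancy b (leq_trans (leq_addl _ _) S1).
  rewrite E3 discrepancy_cat size_cat plus_INR.
  by have := Rabs_triang (discrepancy b r) (discrepancy b r'); lra.
have Sv : (size v <= block_max)%nat.
  by apply: leq_trans S1; rewrite E3 size_cat addnCA leq_addr.
by have := short_discrepancy b Sv; lra.
Qed.

End Frequencies.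

Section LetterFrequencies.
Variables (A : finType) (theta : A -> seq (seq A)) (lam : R) (Rv : A -> R).
Hypothesis Hrs : is_rand_subst theta.
Hypothesis Hsc : semi_compatible theta.
Hypothesis HPF : PF_data theta lam Rv.
Variable p : nat.
Hypothesis Hp : forall b a, (0 < mx_pow theta p b a)%nat.
Local Open Scope R_scope.

(* A legal word v is a factor of some w in theta^m(a); for m >= k, w is a
   concatenation of blocks theta^k(c), so v has relative discrepancy <= delta/2
   up to 2 block_max, which is negligible once |v| is large.  For m < k the word
   is shorter than a uniform bound, so long legal words have m >= k. *)
Theorem letter_frequencies delta : 0 < delta ->
  exists M0 : nat, forall v, inL theta v -> (M0 <= size v)%nat ->
  forall b, Rabs (discrepancy Rv b v) <= delta * INR (size v).
Proof.
move=> Hd; have [a0 _] := card_gt0P (alphabet_nonempty HPF).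
have [k Hk] := column_convergence HPF a0 Hp (eta := delta / 2) ltac:(lra).
set Bk := block_max theta k.
set short_max := (\max_(a : A) \max_(m < k) \sum_(j : A) mx_pow theta m j a)%nat.
have [M1 HM1] := nat_above (4 * INR Bk / delta).
exists (short_max.+1 + M1)%nat => v [a [m [w [Hw Hvw]]]] Hsz b.
case/infixP: Hvw => s [s' Ew].
have Hsv : (size v <= size w)%nat by rewrite Ew !size_cat addnCA leq_addr.
case: (ltnP m k) => Hmk.
  exfalso; move: Hsz; apply/negP; rewrite -ltnNge.
  apply: leq_ltn_trans Hsv _; rewrite (size_derives_letter Hrs Hsc Hw).
  apply: leq_trans (leq_addr _ _); rewrite ltnS.
  apply: leq_trans (leq_bigmax (F := fun a => \max_(m < k) \sum_(j : A) mx_pow theta m j a) a).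
  exact: (leq_bigmax (F := fun m : 'I_k => \sum_(j : A) mx_pow theta m j a) (Ordinal Hmk)).
have : derives theta (k + (m - k)) [:: a] w by rewrite subnKC.
case/derives_add => u [_ Hu].
have := factor_discrepancy Hrs Hsc HPF (eta := delta / 2) ltac:(lra) Hk b Hu Ew.
have : INR M1 <= INR (size v).
  by apply: le_INR; apply/leP; apply: leq_trans Hsz; apply: leq_addl.
have B0 := pos_INR Bk.
have : 4 * INR Bk <= delta * INR M1.
  have := Rmult_le_compat_l delta _ _ ltac:(lra) HM1.
  by have -> : delta * (4 * INR Bk / delta) = 4 * INR Bk by field; lra.
rewrite -/Bk; nra.
Qed.

End LetterFrequencies.

Lemma pboolP (P : Prop) : pbool P <-> P.
Proof. by rewrite /pbool; case: excluded_middle_informative. Qed.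

Definition expanding (A : finType) (theta : A -> seq (seq A)) : Prop :=
  exists b x, x \in theta b /\ (2 <= size x)%nat.

Section LanguageGrowth.
Variables (A : finType) (theta : A -> seq (seq A)).
Hypothesis Hrs : is_rand_subst theta.
Hypothesis Hsc : semi_compatible theta.
Variable p : nat.
Hypothesis Hp : forall b a, (0 < mx_pow theta p b a)%nat.
Hypothesis Hexp : expanding theta.

Lemma letter_recurs a :
  exists q z1 z2, z1 <> [::] /\ derives theta q [:: a] (z1 ++ a :: z2).
Proof.
have [u Hu] := derives_exists Hrs p.+1 [:: a].
have Hsu : (2 <= size u)%nat.
  case: Hexp => b [x [Hx Hsx]].
  rewrite (size_derives_letter Hrs Hsc Hu) /=; apply: leq_trans Hsx _.
  rewrite size_count; apply: leq_sum => j _; rewrite (count_theta Hrs Hsc j Hx).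
  by rewrite (bigD1 b) //=; apply: leq_trans (leq_addr _ _); rewrite leq_pmulr.
case: u Hu Hsu => [|e [|f u]] // Hu _.
have [we Hwe] := derives_exists Hrs p [:: e].
have [yf Hyf] := derives_exists Hrs p [:: f].
have [wr Hwr] := derives_exists Hrs p u.
have Ha : a \in yf.
  by rewrite -has_pred1 has_count (count_derives_letter Hrs Hsc a Hyf) Hp.
move: Hyf; case/splitPr: Ha => y1 y2 Hyf.
exists (p + p.+1)%nat, (we ++ y1), (y2 ++ wr); split.
  by have := size_derives_ge Hrs Hwe; case: we {Hwe}.
apply/derives_add; exists [:: e, f & u]; split => //.
rewrite -!catA /= -cat1s; apply: derives_cat => //.
rewrite -cat1s (_ : y1 ++ a :: y2 ++ wr = (y1 ++ a :: y2) ++ wr); last by rewrite -catA.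
exact: derives_cat.
Qed.

Lemma left_extension v : inL theta v -> exists c, inL theta (c :: v).
Proof.
case=> a [m [w [Hw /infixP [s [s' Ew]]]]].
have [q [z1 [z2 [Hz1 Hz]]]] := letter_recurs a.
have [Z1 HZ1] := derives_exists Hrs m z1.
have [Z2 HZ2] := derives_exists Hrs m z2.
have HZ : derives theta m (z1 ++ a :: z2) (Z1 ++ w ++ Z2).
  by rewrite -cat1s; apply: derives_cat => //; apply: derives_cat.
have NE : Z1 ++ s <> [::].
  have := size_derives_ge Hrs HZ1; case: Z1 {HZ1 HZ} => [|//].
  by rewrite leqn0 size_eq0 => /eqP /Hz1.
have HW : derives theta (m + q) [:: a] ((Z1 ++ s) ++ v ++ s' ++ Z2).
  have -> : (Z1 ++ s) ++ v ++ s' ++ Z2 = Z1 ++ w ++ Z2 by rewrite Ew -!catA.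
  by apply/derives_add; exists (z1 ++ a :: z2).
move: (Z1 ++ s) NE HW => P; case/lastP: P => // P c _ HW.
exists c, a, (m + q)%nat, (rcons P c ++ v ++ s' ++ Z2); split => //.
by apply/infixP; exists P, (s' ++ Z2); rewrite -cats1 -!catA.
Qed.

(* Left extension maps L_(m+1) onto L_m via removal of the first letter. *)
Lemma Lcard_mono m m' : (m <= m')%nat -> (Lcard theta m <= Lcard theta m')%nat.
Proof.
move/subnK <-; elim: (m' - m)%nat => [|d IH] //; apply: leq_trans IH _.
rewrite /Lcard; apply: leq_trans (leq_imset_card (@behead_tuple _ A) _).
apply: subset_leq_card; apply/subsetP => t.
rewrite inE => /pboolP /left_extension [c Hc].
apply/imsetP; exists [tuple of c :: t]; last by apply: val_inj.
by rewrite inE; apply/pboolP.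
Qed.

End LanguageGrowth.

Lemma legal_words_short (A : finType) (theta : A -> seq (seq A)) :
  is_rand_subst theta -> ~ expanding theta -> forall v, inL theta v -> (size v <= 1)%nat.
Proof.
move=> Hrs Hnexp.
have Hletter b x : x \in theta b -> size x = 1%nat.
  move=> Hx; case: (Hrs b) => _ /(_ x Hx); case: x Hx => [//|c [|d x]] //= Hx _.
  by exfalso; apply: Hnexp; exists b, [:: c, d & x].
have size_theta_word u w : w \in theta_word theta u -> size w = size u.
  elim: u w => [|a u IH] w /=; first by rewrite inE => /eqP ->.
  by case/allpairsP => [[x y] [/= Hx Hy ->]]; rewrite size_cat (Hletter _ _ Hx) (IH _ Hy).
have size_derives k u w : derives theta k u w -> size w = size u.
  elim: k w => [|k IH] w; first by move/derives0 ->.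
  by case/derivesS => s [/IH <- /size_theta_word].
move=> v [a [m [w [/size_derives Hw /infixP [s [s' E]]]]]].
by move: Hw; rewrite E !size_cat /= => <-; rewrite addnCA leq_addr.
Qed.

Section RealArithmetic.
Local Open Scope R_scope.

Lemma floorR_spec x : 0 <= x -> INR (floorR x) <= x /\ x < INR (floorR x) + 1.
Proof.
move=> Hx; have [H1 H2] := base_Int_part x.
have Hz : (0 <= Int_part x)%Z.
  have H3 : (-1 < Int_part x)%Z by apply: lt_IZR; rewrite /=; lra.
  exact: (proj1 (Z.lt_pred_le 0 (Int_part x)) H3).
by rewrite /floorR INR_IZR_INZ Znat.Z2Nat.id //; lra.
Qed.

Lemma le_floorR m x : 0 <= x -> INR m <= x -> (m <= floorR x)%nat.
Proof.
move=> Hx Hm; have [_ H] := floorR_spec Hx.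
have : INR m < INR (floorR x).+1 by rewrite S_INR; lra.
by move/INR_lt/ltP.
Qed.

Lemma floorR_le m x : 0 <= x -> x <= INR m -> (floorR x <= m)%nat.
Proof. by move=> Hx Hm; have [H _] := floorR_spec Hx; apply/leP; apply: INR_le; lra. Qed.

Lemma naturals_in_interval (lo hi : R) (B : nat) : 0 <= lo -> lo <= hi ->
  INR (size [seq m <- iota 0 B | pbool (lo <= INR m <= hi)]) <= hi - lo + 2.
Proof.
move=> Hlo Hlh.
set s := [seq m <- _ | _]; set c := floorR lo; set d := floorR hi.
have Hs : {subset s <= iota c (d.+1 - c)}.
  move=> m; rewrite mem_filter => /andP [/pboolP [H1 H2] _].
  have Hc : (c <= m)%nat by apply: floorR_le.
  have Hd : (m <= d)%nat by apply: le_floorR => //; lra.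
  rewrite mem_iota Hc /= subnKC ?ltnS //.
  by apply: leq_trans Hc _; apply: leq_trans Hd _.
have Hu : uniq s by apply: filter_uniq; apply: iota_uniq.
have := uniq_leq_size Hu Hs; rewrite size_iota => /leP /le_INR.
have [C1 C2] := floorR_spec Hlo; have [D1 D2] := floorR_spec (Rle_trans _ _ _ Hlo Hlh).
case: (leqP c d.+1) => Hcd; last first.
  by move: Hcd => /ltnW; rewrite -subn_eq0 => /eqP ->; rewrite /=; lra.
rewrite minus_INR; last by apply/leP.
rewrite S_INR /c /d => HH.
move: C1 C2 D1 D2 HH; clear; set x := INR (size s); lra.
Qed.

Lemma Rdiv_le_denominator x y z : 0 <= x -> 0 < y -> y <= z -> x / z <= x / y.
Proof.
move=> Hx Hy Hyz; rewrite /Rdiv; apply: Rmult_le_compat_l => //.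
by apply: Rinv_le_contravar.
Qed.

Lemma INR_expn n k : INR (expn n k) = INR n ^ k.
Proof. by elim: k => [|k IH]; rewrite ?expn0 // expnS mult_INR IH. Qed.

Lemma sum_seq_le (T : eqType) (s : seq T) (f g : T -> R) :
  (forall x, x \in s -> f x <= g x) ->
  \big[Rplus/0]_(x <- s) f x <= \big[Rplus/0]_(x <- s) g x.
Proof.
elim: s => [|x s IH] H; first by rewrite !big_nil; lra.
rewrite !big_cons; apply: Rplus_le_compat; first by apply: H; rewrite inE eqxx.
by apply: IH => y Hy; apply: H; rewrite inE Hy orbT.
Qed.

Lemma sum_seq_const (T : Type) (s : seq T) (k : R) :
  \big[Rplus/0]_(x <- s) k = INR (size s) * k.
Proof.
elim: s => [|x s IH]; first by rewrite big_nil /=; ring.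
by rewrite big_cons IH (_ : size (x :: s) = (size s).+1) // S_INR; ring.
Qed.

Lemma size_flatten_map (T U : Type) (s : seq T) (f : T -> seq U) :
  INR (size (flatten [seq f x | x <- s])) = \big[Rplus/0]_(x <- s) INR (size (f x)).
Proof.
elim: s => [|x s IH]; first by rewrite big_nil.
by rewrite big_cons /= size_cat plus_INR IH.
Qed.

Lemma INR_prodA (A : finType) (n : A -> nat) :
  INR (\prod_(b : A) n b) = prodA (fun b => INR (n b)).
Proof.
rewrite /prodA -big_enum /=; elim: (enum A) => [|x s IH]; first by rewrite big_nil.
by rewrite big_cons /= mult_INR IH.
Qed.

Lemma prodA_ge0 (A : finType) (f : A -> R) : (forall b, 0 <= f b) -> 0 <= prodA f.
Proof.
move=> H; rewrite /prodA; elim: (enum A) => [|x s IH] /=; first lra.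
exact: Rmult_le_pos.
Qed.

Lemma prodA_le (A : finType) (f g : A -> R) :
  (forall b, 0 <= f b <= g b) -> prodA f <= prodA g.
Proof.
move=> H; rewrite /prodA; elim: (enum A) => [|x s IH] /=; first lra.
have [H1 H2] := H x.
have H3 : 0 <= foldr Rmult 1 [seq f i | i <- s].
  elim: s {IH} => [|y s IH'] /=; first lra.
  by apply: Rmult_le_pos => //; case: (H y).
exact: Rmult_le_compat.
Qed.

End RealArithmetic.

Section Preimages.
Variables (A : finType) (theta : A -> seq (seq A)) (lam : R) (Rv : A -> R).
Hypothesis Hrs : is_rand_subst theta.
Hypothesis Hsc : semi_compatible theta.
Hypothesis HPF : PF_data theta lam Rv.
Local Open Scope R_scope.

Definition nK : R := INR #|A| * INR (Kmax theta).

Lemma Kmax_pos : (0 < Kmax theta)%nat.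
Proof.
have [a0 _] := card_gt0P (alphabet_nonempty HPF).
exact: leq_trans (ell1_pos Hrs a0) (ell1_le_Kmax theta a0).
Qed.

Lemma nK_pos : 0 < nK.
Proof.
apply: Rmult_lt_0_compat; apply: lt_0_INR; apply/ltP.
  exact: alphabet_nonempty HPF.
exact: Kmax_pos.
Qed.

(* lam = sum_c R_c ell_c: the column sums of M are the lengths ell_c. *)
Lemma lam_mean_length : rsum (fun c => Rv c * INR (ell1 theta c)) = lam.
Proof.
rewrite (rsum_ext (g := fun c => rsum (fun b => INR (subst_mx theta b c) * Rv c))); last first.
  move=> c; rewrite /ell1 size_count INR_sum -rsum_scal.
  by apply: rsum_ext => b; rewrite Rmult_comm.
rewrite rsum_swap (rsum_ext (g := fun b => lam * Rv b)); last by move=> b; apply: Rv_eig.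
by rewrite rsum_scal (Rv_sum HPF) Rmult_1_r.
Qed.

Lemma sum_lengths_le : rsum (fun c => INR (ell1 theta c)) <= nK.
Proof.
rewrite /nK -rsum_const; apply: rsum_le => c.
by apply/le_INR/leP; exact: ell1_le_Kmax.
Qed.

Lemma image_length_deviation u t : t \in theta_word theta u ->
  INR (size t) - lam * INR (size u) =
  rsum (fun c => discrepancy Rv c u * INR (ell1 theta c)).
Proof.
move=> Ht; rewrite (size_theta_word Hrs Hsc Ht) INR_sum -lam_mean_length.
rewrite [_ * INR (size u)]Rmult_comm -rsum_scal -rsum_sub.
by apply: rsum_ext => c; rewrite mult_INR /discrepancy; ring.
Qed.

Lemma size_theta_word_le u t : t \in theta_word theta u ->
  (size t <= Kmax theta * size u)%nat.
Proof.
move=> Ht; rewrite (size_theta_word Hrs Hsc Ht) size_count big_distrr /=.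
by apply: leq_sum => c _; rewrite mulnC leq_mul2r ell1_le_Kmax orbT.
Qed.

Lemma preimage_bounds delta M0 N u t :
  0 < delta -> delta * nK < lam ->
  (forall v, inL theta v -> (M0 <= size v)%nat ->
     forall b, Rabs (discrepancy Rv b v) <= delta * INR (size v)) ->
  (Kmax theta * M0 <= N)%nat -> inL theta u -> t \in theta_word theta u -> size t = N ->
  INR N / (lam + delta * nK) <= INR (size u) <= INR N / (lam - delta * nK) /\
  forall b, INR (count_mem b u) <= (Rv b + delta) * INR (size u).
Proof.
move=> Hd Hdl HM0 HN Hu Ht Hs.
have Hsu : (M0 <= size u)%nat.
  by rewrite -(leq_pmul2l Kmax_pos); apply: leq_trans HN _; rewrite -Hs size_theta_word_le.
have Hfreq := HM0 _ Hu Hsu.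
have L0 := lam_pos HPF; have C0 := nK_pos.
have s0 := pos_INR (size u).
have Hdev : Rabs (INR N - lam * INR (size u)) <= delta * INR (size u) * nK.
  rewrite -Hs (image_length_deviation Ht); apply: Rle_trans (rsum_abs _) _.
  apply: Rle_trans (Rmult_le_compat_l (delta * INR (size u)) _ _ _ sum_lengths_le); last first.
    by apply: Rmult_le_pos; lra.
  rewrite -rsum_scal; apply: rsum_le => c.
  rewrite Rabs_mult (Rabs_right (INR _)); last by apply: Rle_ge; apply: pos_INR.
  by apply: Rmult_le_compat_r; [apply: pos_INR | apply: Hfreq].
have [D1 D2] := Rabs_le_bounds Hdev.
split; [split|].
- by apply: Rdiv_le_l; nra.
- by apply: Rdiv_ge_r; nra.
- move=> b; have := Rle_abs (discrepancy Rv b u); have := Hfreq b.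
  by rewrite /discrepancy; lra.
Qed.

End Preimages.

(* The window of admissible preimage lengths is asymptotically narrower than
   the one in the theorem: with delta = eps/2, for N large the number of integers
   in [N/(lam + delta c), N/(lam - delta c)] is at most N(1/(lam - eps c) - 1/(lam + eps c)). *)
Lemma window_width (lam c eps : R) : (0 < eps)%R -> (0 < c)%R -> (eps * c < lam)%R ->
  exists N2 : nat, forall N : nat, (N2 <= N)%nat ->
  (INR N / (lam - eps / 2 * c) - INR N / (lam + eps / 2 * c) + 2 <=
   INR N * (1 / (lam - eps * c) - 1 / (lam + eps * c)))%R.
Proof.
move=> He Hc Hl.
set gd := (1 / (lam - eps / 2 * c) - 1 / (lam + eps / 2 * c))%R.
set ge := (1 / (lam - eps * c) - 1 / (lam + eps * c))%R.
have Hg : (0 < ge - gd)%R.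
  rewrite /ge /gd /Rdiv !Rmult_1_l.
  have : (/ (lam - eps / 2 * c) < / (lam - eps * c))%R.
    by apply: Rinv_lt_contravar; [apply: Rmult_lt_0_compat | ]; nra.
  have : (/ (lam + eps * c) < / (lam + eps / 2 * c))%R.
    by apply: Rinv_lt_contravar; [apply: Rmult_lt_0_compat | ]; nra.
  lra.
have [N2 HN2] := nat_above (2 / (ge - gd)).
exists N2 => N HN.
have HN' : (2 <= INR N * (ge - gd))%R.
  apply: (Rle_trans _ (2 / (ge - gd) * (ge - gd))); first by right; field; lra.
  apply: Rmult_le_compat_r; first lra.
  by apply: Rle_trans HN2 (le_INR _ _ (elimT leP HN)).
have -> : (INR N / (lam - eps / 2 * c) - INR N / (lam + eps / 2 * c) = INR N * gd)%R.
  by rewrite /gd; field; nra.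
lra.
Qed.

Section Counting.
Variables (A : finType) (theta : A -> seq (seq A)).
Hypothesis Hrs : is_rand_subst theta.
Local Open Scope R_scope.

Definition legal_tuples (m : nat) : {set m.-tuple A} :=
  [set u : m.-tuple A | pbool (inL theta u)].
Definition images_of_length (N : nat) (v : seq A) : seq (seq A) :=
  [seq t <- undup (theta_word theta v) | size t == N].

Definition length_window (lo hi : R) (N : nat) : seq nat :=
  [seq m <- iota 0 N.+1 | pbool (lo <= INR m <= hi)].

(* Every t in I_N is an image of a legal word u; if all such u have length in
   [lo, hi], then #I_N is at most the number of pairs (u, t). *)
Lemma Icard_le_preimages N lo hi :
  (forall v t, inL theta v -> t \in theta_word theta v -> size t = N ->
     lo <= INR (size v) <= hi) ->
  INR (Icard theta N) <= \big[Rplus/0]_(m <- length_window lo hi N)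
    \big[Rplus/0]_(u <- enum (legal_tuples m)) INR (size (images_of_length N u)).
Proof.
move=> Hwin.
rewrite (eq_bigr (fun m => INR (size (flatten
  [seq images_of_length N (val u) | u <- enum (legal_tuples m)])))); last first.
  by move=> m _; rewrite size_flatten_map.
rewrite -size_flatten_map; apply/le_INR/leP.
rewrite /Icard cardE -(size_map val); apply: uniq_leq_size.
  by rewrite (map_inj_uniq val_inj) enum_uniq.
move=> x /mapP [t]; rewrite mem_enum inE => /pboolP [HtL [v [HvL Htv]]] ->.
have Hst : size t = N by rewrite size_tuple.
apply/flatten_mapP; exists (size v).
  rewrite mem_filter mem_iota /= add0n ltnS -Hst (size_theta_word_ge Hrs Htv) andbT.
  by apply/pboolP; exact: Hwin Htv Hst.
apply/flatten_mapP; exists (in_tuple v); first by rewrite mem_enum inE; apply/pboolP.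
by rewrite mem_filter mem_undup Htv Hst eqxx.
Qed.

Lemma images_le_power_product u (E : A -> R) :
  (forall b, INR (count_mem b u) <= E b) ->
  INR (size (undup (theta_word theta u))) <=
    prodA (fun b => Rpower (INR (card_img theta b)) (E b)).
Proof.
move=> HE; apply: Rle_trans (le_INR _ _ (elimT leP (number_of_images theta u))) _.
rewrite INR_prodA; apply: prodA_le => b; split; first exact: pos_INR.
have Cb1 := INR_ge1 (card_img_pos Hrs b).
rewrite INR_expn -Rpower_pow; last lra.
exact: Rle_Rpower.
Qed.

Lemma images_of_length_le N u (E : A -> R) :
  (forall t, t \in theta_word theta u -> size t = N ->
     forall b, INR (count_mem b u) <= E b) ->
  INR (size (images_of_length N u)) <=
    prodA (fun b => Rpower (INR (card_img theta b)) (E b)).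
Proof.
move=> HE; case Eimg: (images_of_length N u) => [|t0 l].
  by apply: prodA_ge0 => b; rewrite /Rpower; left; apply: exp_pos.
have : t0 \in images_of_length N u by rewrite Eimg inE eqxx.
rewrite mem_filter mem_undup => /andP [/eqP Hs0 Ht0].
rewrite -Eimg; apply: Rle_trans (images_le_power_product (HE _ Ht0 Hs0)).
by apply/le_INR/leP; rewrite size_filter count_size.
Qed.

Lemma preimage_sum_le lo hi N F Pr : 0 <= Pr ->
  (forall m (u : m.-tuple A), inL theta u -> INR (size (images_of_length N u)) <= Pr) ->
  (forall m, m \in length_window lo hi N -> (Lcard theta m <= Lcard theta F)%nat) ->
  \big[Rplus/0]_(m <- length_window lo hi N)
    \big[Rplus/0]_(u <- enum (legal_tuples m)) INR (size (images_of_length N u))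
  <= INR (size (length_window lo hi N)) * (INR (Lcard theta F) * Pr).
Proof.
move=> Pr0 Himg HL; rewrite -sum_seq_const; apply: sum_seq_le => m Hm.
apply: Rle_trans (_ : \big[Rplus/0]_(u <- enum (legal_tuples m)) Pr <= _).
  by apply: sum_seq_le => u; rewrite mem_enum inE => /pboolP /Himg.
rewrite sum_seq_const -cardE; apply: Rmult_le_compat_r => //.
exact/le_INR/leP/HL.
Qed.

End Counting.

Section ExpandingCase.
Variables (A : finType) (theta : A -> seq (seq A)) (lam : R) (Rv : A -> R).
Hypothesis Hrs : is_rand_subst theta.
Hypothesis Hsc : semi_compatible theta.
Hypothesis HPF : PF_data theta lam Rv.
Variable p : nat.
Hypothesis Hp : forall b a, (0 < mx_pow theta p b a)%nat.
Hypothesis Hexp : expanding theta.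
Variable eps : R.
Hypothesis Heps : (0 < eps)%R.
Hypothesis Hlt : (eps * nK theta < lam)%R.
Local Open Scope R_scope.

(* With delta = eps/2 in the frequency bound: a legal word v with an image of
   (large) length N has length in [N/(lam + delta nK), N/(lam - delta nK)], and
   contains each letter b at most (R_b + eps) N/lamm times. *)
Lemma legal_preimage_bounds : exists N1 : nat, forall N, (N1 <= N)%nat ->
  forall v t, inL theta v -> t \in theta_word theta v -> size t = N ->
  [/\ INR N / (lam + eps / 2 * nK theta) <= INR (size v),
      INR (size v) <= INR N / (lam - eps / 2 * nK theta) &
      forall b, INR (count_mem b v) <= (Rv b + eps) * INR N / (lam - eps * nK theta)].
Proof.
have C0 := nK_pos Hrs HPF; have L0 := lam_pos HPF.
have [M0 HM0] := letter_frequencies Hrs Hsc HPF Hp (delta := eps / 2) ltac:(lra).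
exists (Kmax theta * M0)%nat => N HN v t Hv Ht Hs.
have [[H1 H2] Hcount] :=
  preimage_bounds Hrs Hsc HPF (delta := eps / 2) ltac:(lra) ltac:(nra) HM0 HN Hv Ht Hs.
split => // b; apply: Rle_trans (Hcount b) _; rewrite /Rdiv Rmult_assoc.
have := Rv_pos HPF b; have := pos_INR (size v).
have : INR (size v) <= INR N * / (lam - eps * nK theta).
  by apply: Rle_trans H2 (Rdiv_le_denominator (pos_INR N) _ _); nra.
by move=> *; apply: Rmult_le_compat; lra.
Qed.

Lemma Icard_bound_expanding :
  let lamm := lam - eps * nK theta in
  let lamp := lam + eps * nK theta in
  exists N0 : nat, forall N : nat, (N0 <= N)%nat ->
  INR (Icard theta N) <= INR N * (1 / lamm - 1 / lamp)
    * INR (Lcard theta (floorR (INR N / lamm)))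
    * prodA (fun a => Rpower (INR (card_img theta a)) ((Rv a + eps) * INR N / lamm)).
Proof.
have C0 := nK_pos Hrs HPF; have L0 := lam_pos HPF.
have [N1 HN1] := legal_preimage_bounds.
have [N2 HN2] := window_width Heps C0 Hlt.
move=> lamm lamp; exists (N1 + N2)%nat => N HN.
have {HN1}Hpre := HN1 N (leq_trans (leq_addr _ _) HN).
have {HN2}Hwidth := HN2 N (leq_trans (leq_addl _ _) HN).
set lo := INR N / (lam + eps / 2 * nK theta) in Hpre Hwidth *.
set hi := INR N / (lam - eps / 2 * nK theta) in Hpre Hwidth *.
set Pr := prodA _; set F := floorR (INR N / lamm).
have N0 := pos_INR N.
have Pr0 : 0 <= Pr by apply: prodA_ge0 => b; rewrite /Rpower; left; apply: exp_pos.
have lo_hi : lo <= hi by apply: Rdiv_le_denominator; nra.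
have hi_X : hi <= INR N / lamm by apply: Rdiv_le_denominator; rewrite /lamm; nra.
have lo0 : 0 <= lo by apply: Rdiv_le_0_compat => //; nra.
have Hwindow : INR (size (length_window lo hi N)) <= hi - lo + 2.
  exact: naturals_in_interval.
apply: Rle_trans (Icard_le_preimages Hrs (lo := lo) (hi := hi) _) _.
  by move=> v t Hv Ht Hs; have [] := Hpre v t Hv Ht Hs.
apply: Rle_trans (preimage_sum_le (F := F) Pr0 _ _) _.
-
  move=> m u Hu; apply: (images_of_length_le Hrs) => t Ht Hs.
  by have [] := Hpre _ _ Hu Ht Hs.
- (* admissible lengths are at most N/lamm, so #L_m <= #L_F *)
  move=> m; rewrite mem_filter => /andP [/pboolP [_ Hm] _].
  apply/(Lcard_mono Hrs Hsc Hp Hexp)/le_floorR; last lra.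
  by apply: Rdiv_le_0_compat => //; rewrite /lamm; lra.
have LP : 0 <= INR (Lcard theta F) * Pr by apply: Rmult_le_pos => //; apply: pos_INR.
rewrite [X in _ <= X]Rmult_assoc.
apply: Rmult_le_compat_r => //; rewrite /lamm /lamp.
by apply: Rle_trans Hwindow Hwidth.
Qed.

End ExpandingCase.

(* The degenerate case: if no image has length >= 2, then I_N is empty for
   N >= 2 and the bound holds trivially. *)
Lemma Icard_bound_degenerate (A : finType) (theta : A -> seq (seq A)) (lam : R) (Rv : A -> R)
    (eps : R) :
  is_rand_subst theta -> ~ expanding theta -> PF_data theta lam Rv ->
  (0 < eps)%R -> (eps * nK theta < lam)%R ->
  let lamm := (lam - eps * nK theta)%R in
  let lamp := (lam + eps * nK theta)%R in
  exists N0 : nat, forall N : nat, (N0 <= N)%nat ->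
  (INR (Icard theta N) <= INR N * (1 / lamm - 1 / lamp)
    * INR (Lcard theta (floorR (INR N / lamm)))
    * prodA (fun a => Rpower (INR (card_img theta a)) ((Rv a + eps) * INR N / lamm)))%R.
Proof.
move=> Hrs Hnexp HPF Heps Hlt lamm lamp; exists 2%nat => N HN.
have -> : Icard theta N = 0%nat.
  apply/eqP; rewrite cards_eq0; apply/eqP/setP => t; rewrite inE in_set0.
  apply/negbTE/negP => /pboolP [/(legal_words_short Hrs Hnexp)].
  by rewrite size_tuple => /(leq_trans HN).
have C0 := nK_pos Hrs HPF; have L0 := lam_pos HPF.
have gap : (0 <= 1 / lamm - 1 / lamp)%R.
  have : (/ lamp <= / lamm)%R by apply: Rinv_le_contravar; rewrite /lamm /lamp; nra.
  by rewrite /Rdiv !Rmult_1_l; lra.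
apply: Rmult_le_pos; last by apply: prodA_ge0 => b; rewrite /Rpower; left; apply: exp_pos.
by apply: Rmult_le_pos; [apply: Rmult_le_pos => //; apply: pos_INR | apply: pos_INR].
Qed.

Theorem mainTheorem6 (A : finType) (theta : A -> seq (seq A)) (lam : R) (Rv : A -> R) :
  is_rand_subst theta -> semi_compatible theta -> primitive_subst theta ->
  PF_data theta lam Rv ->
  forall eps : R, (0 < eps)%R ->
  (eps * INR #|A| * INR (Kmax theta) < lam)%R ->
  let lamm := (lam - eps * INR #|A| * INR (Kmax theta))%R in
  let lamp := (lam + eps * INR #|A| * INR (Kmax theta))%R in
  exists N0 : nat, forall N : nat, (N0 <= N)%N ->
    (INR (Icard theta N) <=
       INR N * (1 / lamm - 1 / lamp) * INR (Lcard theta (floorR (INR N / lamm)))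
       * prodA (fun a => Rpower (INR (card_img theta a)) ((Rv a + eps) * INR N / lamm)))%R.
Proof.
move=> Hrs Hsc [p [_ Hp]] HPF eps Heps.
have -> : (eps * INR #|A| * INR (Kmax theta) = eps * nK theta)%R by rewrite /nK; ring.
move=> Hlt; case: (classic (expanding theta)) => Hexp.
  exact (Icard_bound_expanding Hrs Hsc HPF Hp Hexp Heps Hlt).
exact (Icard_bound_degenerate Hrs Hexp HPF Heps Hlt).
Qed.
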